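(* Let $\Lambda_i\in\mathcal H_I$, $i\in[n]$, $\mathbb P$ atomless, $Y\ge0$ with $1<\mathbb E^{\mathbb P}(Y)<\infty$. Suppose $\overline\Lambda^*$ is attainable and at least one $\Lambda_i$ is constant. Then for all $X\in\mathcal X$ $$\mathop{\square}_{i=1}^n\sup_{\mathbb Q\in\mathcal P(\mathbb P,0,Y)}\Lambda_i\mathrm{VaR}^{\mathbb Q}(X)=\inf\Big\{x\in\mathbb R:\mathbb E^{\mathbb P}(Y\mathds 1_{\{X>x\}})\le\sum_{i=1}^n\lambda_i^+\Big\}.$$
   Context: $\Lambda\mathrm{VaR}^{\mathbb Q}(X)=\inf\{x\in\mathbb R:\mathbb Q(X>x)\le\Lambda(x)\}$; $\mathcal H_I$: increasing functions $\mathbb R\to(0,1)$; $\lambda_i^+=\sup_x\Lambda_i(x)$. $\mathcal P(\mathbb P,0,Y)=\{\mathbb Q\ll\mathbb P:0\le\mathrm d\mathbb Q/\mathrm d\mathbb P\le Y\}$. $\overline\Lambda^*(x)=\sup_{y_1+\dots+y_n=x}\sum_i\Lambda_i(y_i)$, attainable if the supremum is attained for every $x$. Inf-convolution $\mathop{\square}_i\rho_i(X)=\inf\{\sum_i\rho_i(X_i):X_i\in\mathcal X,\sum_iX_i=X\}$, $\mathcal X$ a set of real-valued random variables containing constants, closed under sums, differences, multiplication by indicators. *)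

From HB Require Import structures.
From mathcomp Require Import all_boot all_order all_algebra.
From mathcomp Require Import all_classical all_reals all_analysis.
Set Implicit Arguments. Unset Strict Implicit. Unset Printing Implicit Defensive.
Import Order.TTheory GRing.Theory Num.Theory.
Local Open Scope classical_set_scope.
Local Open Scope ring_scope.
Local Open Scope ereal_scope.

Section defs.
Context {d : measure_display} {T : measurableType d} {R : realType}.

Definition atomless (P : probability T R) : Prop :=
  forall A : set T, measurable A -> 0 < P A ->
    exists B : set T, [/\ measurable B, B `<=` A, 0 < P B & P B < P A].

Definition in_HI (L : R -> R) : Prop :=
  {homo L : x y / (x <= y)%R} /\ (forall x, (0 < L x)%R /\ (L x < 1)%R).

Definition LVaR (L : R -> R) (Q : probability T R) (X : T -> R) : \bar R :=
  ereal_inf [set x%:E | x in [set x : R | Q [set w | (x < X w)%R] <= (L x)%:E]].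

Definition Pset (P : probability T R) (Y : T -> R) : set (probability T R) :=
  [set Q | exists f : T -> R, [/\ measurable_fun setT f,
     {ae P, forall w, (0 <= f w)%R /\ (f w <= Y w)%R} &
     forall A, measurable A -> Q A = \int[P]_(w in A) (f w)%:E]].

Definition supLVaR (P : probability T R) (Y : T -> R) (L : R -> R)
    (X : T -> R) : \bar R :=
  ereal_sup [set LVaR L Q X | Q in Pset P Y].

Definition admissible (Xs : set (T -> R)) : Prop :=
  [/\ (forall X, Xs X -> measurable_fun setT X),
      (forall c : R, Xs (fun _ => c)),
      (forall X Z, Xs X -> Xs Z -> Xs (fun w => X w + Z w)%R),
      (forall X Z, Xs X -> Xs Z -> Xs (fun w => X w - Z w)%R) &
      (forall X A, Xs X -> measurable A -> Xs (fun w => X w * \1_A w)%R)].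

Definition infconv (n : nat) (Xs : set (T -> R)) (rho : 'I_n -> (T -> R) -> \bar R)
    (X : T -> R) : \bar R :=
  ereal_inf [set \sum_(i < n) rho i (Z i) | Z in
    [set Z : 'I_n -> T -> R | (forall i, Xs (Z i)) /\
                               (forall w, (\sum_(i < n) Z i w)%R = X w)]].
End defs.

(* overline Lambda^* is attainable: for every x the supremum of
   sum_i Lambda_i(y_i) over y_1+...+y_n = x is attained. *)
Definition attainable {R : realType} (n : nat) (L : 'I_n -> R -> R) : Prop :=
  forall x : R, exists y : 'I_n -> R, (\sum_(i < n) y i = x)%R /\
    forall z : 'I_n -> R, (\sum_(i < n) z i = x)%R ->
      (\sum_(i < n) L i (z i) <= \sum_(i < n) L i (y i))%R.

Definition lam_plus {R : realType} (L : R -> R) : \bar R :=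
  ereal_sup (range (fun x => (L x)%:E)).

From HB Require Import structures.
From mathcomp Require Import all_boot all_order all_algebra.
From mathcomp Require Import all_classical all_reals all_analysis.
From mathcomp Require Import measurable_realfun lra.
Import Order.TTheory GRing.Theory Num.Theory.
Local Open Scope classical_set_scope.
Local Open Scope ring_scope.
Local Open Scope ereal_scope.
Set Implicit Arguments. Unset Strict Implicit. Unset Printing Implicit Defensive.

(* Write [muY] for the finite measure [A |-> E(Y 1_A)].  Every [Q] in
   [P(P,0,Y)] satisfies [Q <= muY], and for [r < 1] any set [C] with
   [muY C > r] is charged by more than [r] by some such [Q]; hence
   [sup_Q LVaR^Q(Z) <= y] when [muY (Z > y) <= L y] and [>= y] when
   [muY (Z > y) > L y].
   If [X = sum Z_i] and each [y_i] slightly exceeds [sup_Q LVaR^Q(Z_i)], then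
   [muY (X > sum y_i) <= sum muY (Z_i > y_i) <= sum lambda_i^+], which bounds
   the inf-convolution from below.
   Conversely, attainability together with one constant [L_i0] makes every
   [L_i] attain [lambda_i^+] at some [y_i].  As [muY] is atomless, [{X > x}]
   splits into pieces [C_i] with [muY (C_i & {X > x}) <= lambda_i^+], and
   [Z_i := (X - x) 1_(C_i) + a_i], where [a_i = y_i] except that [a_i0] makes
   [sum a_i = x], satisfies [sup_Q LVaR^Q(Z_i) <= a_i]. *)

Lemma measurable_gtr_set d (T : measurableType d) (R : realType) (Z : T -> R) (y : R) :
  measurable_fun setT Z -> measurable [set w | (y < Z w)%R].
Proof.
move=> mZ; rewrite -[X in measurable X]setTI.
by apply: measurable_fun_ltr => //; exact: measurable_cst.
Qed.

(* The proof arguments are unused; they let the measure instance below be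
   canonical. *)
Definition density_measure d (T : measurableType d) (R : realType)
    (mu : {measure set T -> \bar R}) (f : T -> R)
    of measurable_fun setT f & (forall x, (0 <= f x)%R) :=
  fun A => \int[mu]_(x in A) (f x)%:E.

Section density_measure.
Context d (T : measurableType d) (R : realType) (mu : {measure set T -> \bar R}).
Variable f : T -> R.
Hypotheses (mf : measurable_fun setT f) (f0 : forall x, (0 <= f x)%R).

Local Notation nu := (density_measure mu mf f0).

Let nu0 : nu set0 = 0. Proof. exact: integral_set0. Qed.

Let nu_ge0 A : 0 <= nu A.
Proof. by apply: integral_ge0 => x _; rewrite lee_fin. Qed.

Let nu_sigma_additive : semi_sigma_additive nu.
Proof.
apply: semi_sigma_additive_nng_induced => [|x]; first exact/measurable_EFinP.
by rewrite lee_fin.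
Qed.

HB.instance Definition _ := isMeasure.Build _ _ _ nu nu0 nu_ge0 nu_sigma_additive.

End density_measure.

Lemma integral_gt0 d (T : measurableType d) (R : realType)
    (mu : {measure set T -> \bar R}) (D : set T) (f : T -> R) :
  measurable D -> measurable_fun D f -> (forall x, D x -> (0 < f x)%R) ->
  0 < mu D -> 0 < \int[mu]_(x in D) (f x)%:E.
Proof.
move=> mD mf f0 muD.
have f0' x : D x -> 0 <= (f x)%:E by move=> Dx; rewrite lee_fin ltW// f0.
rewrite lt_neqAle integral_ge0// andbT; apply/negP => /eqP/esym int0.
have : \int[mu]_(x in D) `|(f x)%:E| = 0.
  by rewrite -int0; apply: eq_integral => x /set_mem Dx; rewrite gee0_abs// f0'.
have mEf : measurable_fun D (EFin \o f) by exact/measurable_EFinP.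
move=> /(ae_eq_integral_abs mu mD mEf) [N [mN N0 DN]].
have : mu D <= mu N.
  apply: le_measure; rewrite ?inE// => x Dx; apply: DN => /(_ Dx) /= /eqP.
  by rewrite eqe gt_eqF// f0.
by rewrite N0 leNgt muD.
Qed.

Lemma measure_sum_gt_le d (T : measurableType d) (R : realType)
    (mu : {measure set T -> \bar R}) n (Z : 'I_n -> T -> R) (y : 'I_n -> R) :
  (forall i, measurable_fun setT (Z i)) ->
  mu [set w | (\sum_(i < n) y i < \sum_(i < n) Z i w)%R] <=
  \sum_(i < n) mu [set w | (y i < Z i w)%R].
Proof.
move=> mZ.
pose F k := if insub k is Some i then [set w | (y i < Z i w)%R] else set0.
have FE (i : 'I_n) : F i = [set w | (y i < Z i w)%R] by rewrite /F valK.
rewrite (eq_bigr (fun i : 'I_n => mu (F i))) => [|i _]; last by rewrite FE.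
apply: content_subadditive.
- by move=> k _; rewrite /F; case: insubP => // i _ _; exact: measurable_gtr_set.
- by apply: measurable_gtr_set; exact: measurable_sum.
- move=> w /= yZ; rewrite -bigcup_mkord.
  have [i yZi] : exists i, (y i < Z i w)%R.
    apply: contrapT => /forallNP yZ'; move: yZ; apply/negP; rewrite -leNgt.
    by apply: ler_sum => i _; rewrite leNgt; apply/negP; exact: yZ'.
  by exists i => //=; rewrite FE.
Qed.

Definition measure_atomless d (T : measurableType d) (R : realType)
    (mu : set T -> \bar R) :=
  forall A, measurable A -> 0 < mu A ->
    exists B, [/\ measurable B, B `<=` A, 0 < mu B & mu B < mu A].

Section atomless_finite_measure.
Context d (T : measurableType d) (R : realType) (mu : {measure set T -> \bar R}).
Hypotheses (mu_fin : mu setT < +oo) (mu_atomless : measure_atomless mu).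

Let mr A : R := fine (mu A).

Let muE A : measurable A -> mu A = (mr A)%:E.
Proof.
move=> mA; rewrite fineK// ge0_fin_numE//; apply: le_lt_trans mu_fin.
by apply: le_measure; rewrite ?inE.
Qed.

Let mr_ge0 A : (0 <= mr A)%R. Proof. exact: fine_ge0. Qed.

Let mr0 : mr set0 = 0%R. Proof. by rewrite /mr measure0. Qed.

Let le_mr A B : measurable A -> measurable B -> A `<=` B -> (mr A <= mr B)%R.
Proof. by move=> mA mB AB; rewrite -lee_fin -!muE//; apply: le_measure; rewrite ?inE. Qed.

Let mrU A B : measurable A -> measurable B -> A `&` B = set0 ->
  mr (A `|` B) = (mr A + mr B)%R.
Proof.
move=> mA mB AB; apply: EFin_inj; rewrite EFinD -!muE//; last exact: measurableU.
exact: measureU.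
Qed.

Let mrD A B : measurable A -> measurable B -> B `<=` A ->
  mr (A `\` B) = (mr A - mr B)%R.
Proof.
move=> mA mB BA; apply/eqP; rewrite eq_sym subr_eq -mrU//.
- by rewrite setUC setDUK.
- exact: measurableD.
- by rewrite setIC setDIK.
Qed.

Let atomless_half A : measurable A -> (0 < mr A)%R ->
  exists B, [/\ measurable B, B `<=` A, (0 < mr B)%R & (mr B * 2 <= mr A)%R].
Proof.
move=> mA A0; have [|B [mB BA B0 BA']] := mu_atomless mA; first by rewrite muE.
rewrite !muE// !lte_fin in B0 BA'.
have [?|?] := leP (mr B * 2)%R (mr A); first by exists B.
exists (A `\` B); split; [exact: measurableD|by []|rewrite mrD//; lra..].
Qed.

Let atomless_small A (e : R) : measurable A -> (0 < mr A)%R -> (0 < e)%R ->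
  exists B, [/\ measurable B, B `<=` A, (0 < mr B)%R & (mr B <= e)%R].
Proof.
move=> mA A0 e0.
have small k : exists B, [/\ measurable B, B `<=` A, (0 < mr B)%R &
    (mr B * 2 ^+ k <= mr A)%R].
  elim: k => [|k [B [mB BA B0 Bk]]]; first by exists A; split; rewrite ?expr0 ?mulr1.
  have [C [mC CB C0 C2]] := atomless_half mB B0.
  exists C; split => //; first exact: subset_trans BA.
  by apply: le_trans Bk; rewrite exprS mulrA ler_wpM2r.
have := archi_boundP (divr_ge0 (mr_ge0 A) (ltW e0)).
set k := Num.bound _ => Ak.
have [B [mB BA B0 Bk]] := small k; exists B; split => //.
have k2 : (k%:R <= 2 ^+ k :> R)%R by rewrite -natrX ler_nat ltnW// ltn_expl.
have := lt_le_trans Ak k2; rewrite ltr_pdivrMr// => Ae.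
have : (0 < 2 ^+ k :> R)%R by exact: exprn_gt0.
nra.
Qed.

Let greedy_step A (t : R) D : exists C, [/\ measurable D, D `<=` A & (mr D <= t)%R] ->
  [/\ measurable C, C `<=` A `\` D, (mr D + mr C <= t)%R &
    forall C', measurable C' -> C' `<=` A `\` D -> (mr D + mr C' <= t)%R ->
      (mr C' <= 2 * mr C)%R].
Proof.
have [[mD DA Dt]|nD] := pselect [/\ measurable D, D `<=` A & (mr D <= t)%R];
  last by exists set0 => /nD.
pose S := [set mr C | C in [set C | [/\ measurable C, C `<=` A `\` D &
   (mr D + mr C <= t)%R]]].
have S0 : S 0%R.
  by exists set0 => //=; rewrite mr0 addr0.
have hS : has_sup S.
  by split; [exists 0%R|exists t => _ [C [_ _ ?] <-]; have := mr_ge0 D; lra].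
have [s0|s0] := leP (sup S) 0%R.
  exists set0 => _; split; rewrite ?mr0 ?addr0// => C mC CA Ct.
  by rewrite mulr0; apply: le_trans s0; apply: sup_upper_bound => //; exists C.
have [_ [C [mC CA Ct] <-] hC] := sup_adherent (divr_gt0 s0 (ltr0Sn _ 1)) hS.
exists C => _; split => // C' mC' C'A C't.
have : (mr C' <= sup S)%R by apply: sup_upper_bound => //; exists C'.
lra.
Qed.

Lemma measure_atomless_exact A (t : R) : measurable A -> (0 <= t)%R ->
  t%:E <= mu A -> exists B, [/\ measurable B, B `<=` A & mu B = t%:E].
Proof.
move=> mA t0; rewrite muE// lee_fin => tA.
have [g hg] := choice (greedy_step A t).
pose D k := iter k (fun B => B `|` g B) set0.
have gD k : [/\ measurable (D k), D k `<=` A & (mr (D k) <= t)%R].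
  elim: k => [|k [mDk DkA Dkt]]; first by rewrite /= mr0; split.
  have [mg gA gt _] := hg _ (And3 mDk DkA Dkt).
  rewrite /= mrU//; last by apply/seteqP; split => // w [? /gA[]].
  by split => //; [exact: measurableU|move=> w [/DkA|/gA[]]].
have mrDS k : mr (D k.+1) = (mr (D k) + mr (g (D k)))%R.
  have [mDk _ _] := gD k; have [mg gA _ _] := hg _ (gD k).
  by rewrite /= mrU//; apply/seteqP; split => // w [? /gA[]].
pose U := \bigcup_k D k.
have mU : measurable U by apply: bigcupT_measurable => k; case: (gD k).
have UA : U `<=` A by move=> w [k _]; case: (gD k) => _ + _; apply.
have Ut : (mr U <= t)%R.
  have cvD : mu \o D @ \oo --> mu U.
    apply: nondecreasing_cvg_mu => [k|//|]; first by case: (gD k).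
    by apply/nondecreasing_seqP => k; apply/subsetPset => w /= Dw; left.
  rewrite -lee_fin -muE// -(cvg_lim _ cvD)//; apply: lime_le; first exact: cvgP cvD.
  by apply: nearW => k /=; case: (gD k) => mDk _ Dkt; rewrite muE// lee_fin.
have [Ult|tU] := ltP (mr U) t.
  2: by exists U; rewrite muE//; split => //; congr EFin; lra.
have [C [mC CAU C0 Ce]] : exists C, [/\ measurable C, C `<=` A `\` U,
    (0 < mr C)%R & (mr C <= t - mr U)%R].
  apply: atomless_small; [exact: measurableD|rewrite mrD//|]; lra.
(* every greedy step adds at least half of [mr C], so [mr (D k)] is unbounded *)
have lin k : (k%:R * mr C <= 2 * mr (D k))%R.
  elim: k => [|k IH]; first by rewrite mul0r mr0 mulr0.
  have DkU : D k `<=` U by move=> w Dw; exists k.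
  have CADk : C `<=` A `\` D k by move=> w /CAU[Aw nUw]; split => // /DkU.
  have [mDk _ _] := gD k; have := le_mr mDk mU DkU.
  have [_ _ _ /(_ C mC CADk)] := hg _ (gD k).
  by rewrite mrDS -natr1 mulrDl mul1r; lra.
have := archi_boundP (divr_ge0 (mulr_ge0 (ler0n _ 2) t0) (ltW C0)).
set k := Num.bound _; rewrite ltr_pdivrMr// => kC.
by have := lin k; case: (gD k) => _ _; lra.
Qed.

Lemma measure_atomless_cover (n : nat) (c : nat -> R) A : measurable A ->
  (forall i, 0 <= c i)%R -> mu A <= (\sum_(i < n.+1) c i)%:E ->
  exists C : nat -> set T, [/\ forall i, measurable (C i),
     forall w, exists2 i, (i <= n)%N & C i w,
     forall i j w, C i w -> C j w -> i = j &
     forall i, mu (C i `&` A) <= (c i)%:E].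
Proof.
pose Cone i : set T := if i is 0 then setT else set0.
have Cone_meas i : measurable (Cone i) by case: i => /=.
have Cone_cover m w : exists2 i, (i <= m)%N & Cone i w by exists 0%N.
have Cone_disj i j w : Cone i w -> Cone j w -> i = j by case: i; case: j.
elim: n c A => [|n IH] c A mA c0 Ac.
  exists Cone; split => // -[|i]; last by rewrite /= set0I measure0 lee_fin.
  by rewrite /= setTI; move: Ac; rewrite big_ord1.
rewrite big_ord_recl /= in Ac.
have [Ac0|c0A] := leP (mu A) (c 0%N)%:E.
  by exists Cone; split => // -[|i]; rewrite /= ?setTI// set0I measure0 lee_fin.
have [B [mB BA Bc]] := measure_atomless_exact mA (c0 0%N) (ltW c0A).
have [|C [mC Ccov Cdisj Cc]] :=
  IH (fun i => c i.+1) (A `\` B) (measurableD mA mB) (fun i => c0 _).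
  rewrite muE; last exact: measurableD.
  rewrite mrD// lee_fin; move: Ac Bc; rewrite !muE// lee_fin => Ac [->].
  by rewrite lerBlDl.
exists (fun i => if i is i'.+1 then C i' `\` B else B); split.
- by case=> [|i] //; apply: measurableD.
- move=> w; have [Bw|nBw] := pselect (B w); first by exists 0%N.
  by have [i ilt Ciw] := Ccov w; exists i.+1.
- by case=> [|i] [|j] w //= => [? []|[]|[/Cdisj h _] [/h ->]].
- case=> [|i]; first by rewrite setIidl// Bc.
  suff -> : (C i `\` B) `&` A = C i `&` (A `\` B) by exact: Cc.
  by apply/seteqP; split => w /=; tauto.
Qed.

End atomless_finite_measure.

Section density.
Context d (T : measurableType d) (R : realType) (P : probability T R) (Y : T -> R).
Hypotheses (mY : measurable_fun setT Y) (Y0 : forall w, (0 <= Y w)%R).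
Hypotheses (EY1 : 1 < \int[P]_w (Y w)%:E) (EYoo : \int[P]_w (Y w)%:E < +oo).

Local Notation muY := (density_measure P mY Y0).

Let muY_fin A : measurable A -> muY A \is a fin_num.
Proof.
move=> mA; rewrite ge0_fin_numE//; apply: le_lt_trans EYoo.
by apply: (le_measure muY); rewrite ?inE.
Qed.

Lemma density_measure_atomless : atomless P -> measure_atomless muY.
Proof.
move=> Patom A mA muA.
pose A' := A `&` [set w | (0 < Y w)%R].
have mA' : measurable A' by apply: measurableI => //; exact: measurable_gtr_set.
have muA' : muY A = muY A'.
  rewrite (measureDI muY mA (measurable_gtr_set 0 mY)).
  rewrite [X in X + _](_ : _ = 0) ?add0e//.
  apply: integral0_eq => w [_ /= /negP]; rewrite -leNgt => Yw.
  by congr EFin; apply/eqP; rewrite eq_le Yw Y0.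
have PA' : 0 < P A'.
  rewrite lt_neqAle measure_ge0 andbT; apply/negP => /eqP/esym PA'0.
  move: muA; rewrite muA' /density_measure null_set_integral// ?ltxx//.
  by apply/measurable_EFinP; exact: measurable_funS mY.
have [B [mB BA' PB PBA']] := Patom A' mA' PA'.
have muB : 0 < muY B.
  apply: integral_gt0 => //; first exact: measurable_funS mY.
  by move=> w /BA' [].
have muA'B : 0 < muY (A' `\` B).
  apply: integral_gt0; [exact: measurableD|exact: measurable_funS mY|by move=> w [[]]|].
  rewrite measureD// ?(setIidr BA') ?sube_gt0//.
  by apply: le_lt_trans (probability_le1 _ mA') _; rewrite ltry.
exists B; split => //; first by move=> w /BA' [].
rewrite muA' (measureDI muY mA' mB) (setIidr BA') lteDr//; exact: muY_fin.
Qed.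

Lemma Pset_le_density Q A : Pset P Y Q -> measurable A ->
  Q A <= \int[P]_(w in A) (Y w)%:E.
Proof.
move=> [f [mf fY QE]] mA; rewrite QE//.
have mfA : measurable_fun A (EFin \o f).
  by apply/measurable_EFinP; exact: measurable_funS mf.
apply: le_trans (lee_abs _) _; apply: le_trans (le_abse_integral _ mA mfA) _.
apply: ae_ge0_le_integral => //.
- by apply: measurableT_comp => //; exact: measurable_funS mf.
- by move=> w _; rewrite lee_fin.
- by apply/measurable_EFinP; exact: measurable_funS mY.
by apply: filterS fY => w [f0 fYw] _ /=; rewrite lee_fin ger0_norm.
Qed.

Lemma Pset_of_density (h : T -> R) : measurable_fun setT h ->
  (forall w, 0 <= h w <= Y w)%R -> \int[P]_w (h w)%:E = 1 ->
  exists2 Q, Pset P Y Q & forall A, measurable A -> Q A = \int[P]_(w in A) (h w)%:E.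
Proof.
move=> mh hY h1.
have h0 w : (0 <= h w)%R by case/andP: (hY w).
pose Q := mnormalize (density_measure P mh h0) P.
have QE A : measurable A -> Q A = \int[P]_(w in A) (h w)%:E.
  move=> mA; rewrite /Q /mnormalize /=.
  rewrite [density_measure _ _ _ _]h1 ifF; last by rewrite eqe oner_eq0.
  by rewrite invr1 mule1.
exists Q => //; exists h; split => //.
by apply: aeW => w; apply/andP.
Qed.

Let integralZ_density (k : R) D : measurable D -> (0 <= k)%R ->
  \int[P]_(w in D) (k * Y w)%:E = k%:E * \int[P]_(w in D) (Y w)%:E.
Proof.
move=> mD k0; under eq_integral do rewrite EFinM.
apply: ge0_integralZl => //; last by move=> w _; rewrite lee_fin.
by apply/measurable_EFinP; exact: measurable_funS mY.
Qed.

(* Conditioning [Y P] on [C] if [C] carries mass at least 1, and otherwise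
   topping [Y 1_C] up with a fraction of [Y 1_(~` C)], gives an element of
   [Pset P Y] charging [C] as much as allowed. *)
Lemma Pset_gt C (r : R) : measurable C -> (r < 1)%R ->
  r%:E < \int[P]_(w in C) (Y w)%:E -> exists2 Q, Pset P Y Q & r%:E < Q C.
Proof.
move=> mC r1 rC; have mCc := measurableC mC.
set g := fine (\int[P]_(w in C) (Y w)%:E).
set gc := fine (\int[P]_(w in ~` C) (Y w)%:E).
have gE : \int[P]_(w in C) (Y w)%:E = g%:E by rewrite fineK// (muY_fin _).
have gcE : \int[P]_(w in ~` C) (Y w)%:E = gc%:E by rewrite fineK// (muY_fin _).
have splitC (f : T -> R) : measurable_fun setT f -> (forall w, 0 <= f w)%R ->
    \int[P]_w (f w)%:E = \int[P]_(w in C) (f w)%:E + \int[P]_(w in ~` C) (f w)%:E.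
  move=> mf f0; rewrite -ge0_integral_setU ?setUv//.
  - exact/measurable_EFinP.
  - by move=> w _; rewrite lee_fin.
  - by rewrite disj_set2E setICr.
have e1 : (1 < g + gc)%R by rewrite -lte_fin EFinD -gE -gcE -splitC.
have rg : (r < g)%R by rewrite -lte_fin -gE.
have gc0 : (0 <= gc)%R by exact: fine_ge0 (measure_ge0 muY _).
pose a : R := (if 1 <= g then g^-1 else 1)%R.
pose b : R := (if 1 <= g then 0 else (1 - g) / gc)%R.
have [a01 b01 ab1 ra] : [/\ 0 <= a <= 1, 0 <= b <= 1,
    a * g + b * gc = 1 & r < a * g]%R.
  rewrite /a /b; case: (leP 1%R g) => g1.
    have g0 : (0 < g)%R by apply: lt_le_trans g1.
    rewrite invr_ge0 invf_le1// mulVf ?gt_eqF// mul0r addr0 lexx ltW//.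
    by split; rewrite ?g1; lra.
  have gc0' : (0 < gc)%R by lra.
  have b0 : (0 <= (1 - g) / gc)%R by apply: divr_ge0; lra.
  have b1 : ((1 - g) / gc <= 1)%R by rewrite ler_pdivrMr// mul1r; lra.
  by rewrite divfK ?gt_eqF// mul1r b0 b1 subrKC lexx ler01.
pose h w := (Y w * (a * \1_C w + b * \1_(~` C) w))%R.
have mh : measurable_fun setT h.
  apply: measurable_funM => //; apply: measurable_funD; apply: measurable_funM;
    by [exact: measurable_cst|exact: measurable_indic].
have wts w : (0 <= a * \1_C w + b * \1_(~` C) w <= 1)%R.
  by rewrite !indicE in_setC; case: (w \in C); rewrite /= ?mulr1 ?mulr0 ?addr0 ?add0r.
have hY w : (0 <= h w <= Y w)%R.
  by have /andP[? ?] := wts w; rewrite mulr_ge0//= ler_piMr.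
have hC : \int[P]_(w in C) (h w)%:E = (a * g)%:E.
  rewrite EFinM -gE -integralZ_density//; last by case/andP: a01.
  apply: eq_integral => w /set_mem Cw.
  by rewrite /h !indicE in_setC mem_set//= mulr1 mulr0 addr0 mulrC.
have hCc : \int[P]_(w in ~` C) (h w)%:E = (b * gc)%:E.
  rewrite EFinM -gcE -integralZ_density//; last by case/andP: b01.
  apply: eq_integral => w /set_mem nCw.
  by rewrite /h !indicE in_setC memNset//= mulr1 mulr0 add0r mulrC.
have [|Q PQ QE] := Pset_of_density mh hY.
  rewrite splitC// ?hC ?hCc -?EFinD ?ab1// => w.
  by case/andP: (hY w).
by exists Q; rewrite // QE// hC lte_fin.
Qed.

End density.

Section supLVaR_density.
Context d (T : measurableType d) (R : realType) (P : probability T R) (Y : T -> R).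
Hypotheses (mY : measurable_fun setT Y) (Y0 : forall w, (0 <= Y w)%R).
Hypotheses (EY1 : 1 < \int[P]_w (Y w)%:E) (EYoo : \int[P]_w (Y w)%:E < +oo).
Variables (L : R -> R) (Z : T -> R).
Hypotheses (HL : in_HI L) (mZ : measurable_fun setT Z).

Lemma supLVaR_le y : \int[P]_(w in [set w | (y < Z w)%R]) (Y w)%:E <= (L y)%:E ->
  supLVaR P Y L Z <= y%:E.
Proof.
move=> ZyL; apply: ge_ereal_sup => _ [Q PQ <-]; apply: ereal_inf_lbound.
exists y => //=; apply: le_trans ZyL.
exact: Pset_le_density (measurable_gtr_set y mZ).
Qed.

Lemma supLVaR_ge y : (L y)%:E < \int[P]_(w in [set w | (y < Z w)%R]) (Y w)%:E ->
  y%:E <= supLVaR P Y L Z.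
Proof.
move=> LZy.
have [Q PQ QZy] :=
  Pset_gt mY Y0 EY1 EYoo (measurable_gtr_set y mZ) (proj2 (proj2 HL y)) LZy.
apply: le_trans (ereal_sup_ubound _) => /=; last by exists Q.
apply: le_ereal_inf_tmp => _ [x /= QZx <-]; rewrite lee_fin leNgt; apply/negP => xy.
have : Q [set w | (y < Z w)%R] <= Q [set w | (x < Z w)%R].
  apply: le_measure; rewrite ?inE; [exact: measurable_gtr_set..|].
  by move=> w /= /(lt_trans xy).
move=> /(lt_le_trans QZy) /lt_le_trans /(_ QZx); rewrite lte_fin ltNge.
by rewrite (proj1 HL) ?ltW.
Qed.

(* For large [k], [muY (Z > -k)] is close to [E(Y) > 1 > L 0 >= L (-k)]. *)
Lemma supLVaR_gtNy : -oo < supLVaR P Y L Z.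
Proof.
suff [k Lk] : exists k : nat,
    (L (- k%:R))%:E < \int[P]_(w in [set w | (- k%:R < Z w)%R]) (Y w)%:E.
  exact: lt_le_trans (ltNyr _) (supLVaR_ge Lk).
apply: contrapT => /forallNP kL.
pose F (k : nat) := [set w | (- k%:R < Z w)%R].
have mF k : measurable (F k) by exact: measurable_gtr_set.
have UF : \bigcup_k F k = setT.
  apply/seteqP; split => // w _; exists (Num.bound `|Z w|%R) => //.
  rewrite /F /= ltrNl (le_lt_trans _ (archi_boundP (normr_ge0 (Z w))))//.
  by rewrite -normrN ler_norm.
have cvF : density_measure P mY Y0 \o F @ \oo --> density_measure P mY Y0 setT.
  rewrite -UF; apply: nondecreasing_cvg_mu => //; first by rewrite UF.
  apply/nondecreasing_seqP => k; apply/subsetPset => w; rewrite /F /=.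
  by apply: le_lt_trans; rewrite lerN2 ler_nat.
have : \int[P]_w (Y w)%:E <= (L 0%R)%:E.
  rewrite -[leLHS]/(density_measure P mY Y0 setT) -(cvg_lim _ cvF)//.
  apply: lime_le; first exact: cvgP cvF.
  apply: nearW => k /=; apply: (@le_trans _ _ (L (- k%:R))%:E).
    by rewrite leNgt; apply/negP; exact: kL.
  by rewrite lee_fin (proj1 HL)// oppr_le0.
apply/negP; rewrite -ltNge; apply: lt_trans EY1.
by rewrite lte_fin (proj2 (proj2 HL 0%R)).
Qed.

End supLVaR_density.

Lemma lam_plus_max (R : realType) (L : R -> R) y :
  (forall t, (L t <= L y)%R) -> lam_plus L = (L y)%:E.
Proof.
move=> Ly; apply/eqP; rewrite eq_le; apply/andP; split.
  by apply: ge_ereal_sup => _ [t _ <-]; rewrite lee_fin.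
by apply: ereal_sup_ubound; exists y.
Qed.

(* Moving mass between the constant [L i0] and [L j] does not change the
   value at [i0], so a maximizer of the sum maximizes every [L j]. *)
Lemma attainable_maximizers (R : realType) n (L : 'I_n -> R -> R) i0 c :
  attainable L -> (forall t, L i0 t = c) ->
  exists y : 'I_n -> R, forall j t, (L j t <= L j (y j))%R.
Proof.
move=> Latt Lc; have [y [sy ymax]] := Latt 0%R; exists y => j t.
have [->|ji0] := eqVneq j i0; first by rewrite !Lc.
have i0j : i0 != j by rewrite eq_sym.
pose z i := if i == j then t else if i == i0 then (y i0 + y j - t)%R else y i.
have /ymax : (\sum_(i < n) z i = 0)%R.
  rewrite -{}[RHS]sy (bigD1 j)//= [RHS](bigD1 j)//= (bigD1 i0)//= [in RHS](bigD1 i0)//=.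
  rewrite /z eqxx (negbTE i0j) eqxx (eq_bigr y) => [|i /andP[]]; first lra.
  by move=> /negbTE -> /negbTE ->.
rewrite (bigD1 j)//= [leRHS](bigD1 j)//= (bigD1 i0)//= [in leRHS](bigD1 i0)//=.
rewrite /z eqxx (negbTE i0j) eqxx !Lc (eq_bigr (fun i => L i (y i))) => [|i /andP[]].
  lra.
by move=> /negbTE -> /negbTE ->.
Qed.

Lemma admissible_split d (T : measurableType d) (R : realType) (Xs : set (T -> R))
    n (X : T -> R) (x : R) (a : 'I_n -> R) (C : 'I_n -> set T) :
  admissible Xs -> Xs X -> (forall i, measurable (C i)) ->
  (forall w, exists i, C i w) -> (forall i j w, C i w -> C j w -> i = j) ->
  (\sum_(i < n) a i = x)%R ->
  exists Z : 'I_n -> T -> R, [/\ forall i, Xs (Z i),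
    forall w, (\sum_(i < n) Z i w = X w)%R &
    forall i, [set w | (a i < Z i w)%R] `<=` C i `&` [set w | (x < X w)%R]].
Proof.
move=> [_ cst add sub mul] XsX mC Ccov Cdisj sa.
exists (fun i w => (X w * \1_(C i) w - x * \1_(C i) w) + a i)%R; split.
- by move=> i; apply: add (cst _); apply: sub; apply: mul => //; exact: cst.
- move=> w; have [i Ciw] := Ccov w.
  have indE j : \1_(C j) w = (j == i)%:R :> R.
    rewrite indicE; have [->|ji] := eqVneq j i; first by rewrite mem_set.
    by rewrite memNset// => /Cdisj/(_ Ciw)/eqP; rewrite (negbTE ji).
  rewrite big_split /= sa (bigD1 i)//= big1 => [|j ji]; last first.
    by rewrite !indE (negbTE ji) !mulr0 subrr.
  by rewrite !indE eqxx !mulr1 addr0 subrK.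
- move=> i w /=; rewrite -mulrBl ltrDr indicE.
  by case: (boolP (w \in C i)) => [/set_mem Ciw|]; rewrite ?mulr0 ?ltxx// mulr1 subr_gt0.
Qed.

Section inf_convolution.
Context d (T : measurableType d) (R : realType) (P : probability T R) (Y : T -> R).
Hypotheses (mY : measurable_fun setT Y) (Y0 : forall w, (0 <= Y w)%R).
Hypotheses (EY1 : 1 < \int[P]_w (Y w)%:E) (EYoo : \int[P]_w (Y w)%:E < +oo).
Variables (n : nat) (L : 'I_n -> R -> R).
Hypothesis HL : forall i, in_HI (L i).

Local Notation muY := (density_measure P mY Y0).
Local Notation lam := (\sum_(i < n) lam_plus (L i)).

Lemma tail_inf_le_sum_supLVaR (X : T -> R) (Z : 'I_n -> T -> R) : (0 < n)%N ->
  (forall i, measurable_fun setT (Z i)) -> (forall w, \sum_(i < n) Z i w = X w)%R ->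
  ereal_inf [set x%:E | x in [set x : R |
    \int[P]_(w in [set w | (x < X w)%R]) (Y w)%:E <= lam]]
  <= \sum_(i < n) supLVaR P Y (L i) (Z i).
Proof.
move=> n0 mZ sZ.
have [->|Zsum] := eqVneq (\sum_(i < n) supLVaR P Y (L i) (Z i)) +oo; first exact: leey.
have ZNy i : supLVaR P Y (L i) (Z i) != -oo by rewrite gt_eqF ?supLVaR_gtNy.
have Zfin i : supLVaR P Y (L i) (Z i) \is a fin_num.
  rewrite fin_numE ZNy /=; apply: contraNneq Zsum => Zi.
  apply/eqP/(esum_eqyP _ (fun j _ => ZNy j)).
  by exists i; rewrite mem_index_enum.
pose r i := fine (supLVaR P Y (L i) (Z i)).
have -> : \sum_(i < n) supLVaR P Y (L i) (Z i) = (\sum_(i < n) r i)%:E.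
  by rewrite -sumEFin; apply: eq_bigr => i _; rewrite fineK.
apply/lee_addgt0Pr => e e0.
pose y i := (r i + e / n%:R)%R.
have sy : (\sum_(i < n) y i = \sum_(i < n) r i + e)%R.
  rewrite big_split /= sumr_const card_ord -(mulr_natr (e / n%:R)) divfK//.
  by rewrite pnatr_eq0 -lt0n.
have Zy i : \int[P]_(w in [set w | (y i < Z i w)%R]) (Y w)%:E <= lam_plus (L i).
  apply: le_trans (ereal_sup_ubound _) => /=; last by exists (y i).
  rewrite leNgt; apply/negP => /(supLVaR_ge mY Y0 EY1 EYoo (HL i) (mZ i)).
  rewrite -(fineK (Zfin i)) lee_fin -/(r i) leNgt => /negP; apply.
  by rewrite ltrDl divr_gt0// ltr0n.
apply: ereal_inf_lbound; exists (\sum_(i < n) y i)%R => /=; last by rewrite sy EFinD.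
have -> : [set w | (\sum_(i < n) y i < X w)%R] =
    [set w | (\sum_(i < n) y i < \sum_(i < n) Z i w)%R].
  by apply/funext => w /=; rewrite sZ.
apply: le_trans (measure_sum_gt_le muY y mZ) _.
by apply: lee_sum => i _; exact: Zy.
Qed.

Lemma infconv_supLVaR_le (Xs : set (T -> R)) (X : T -> R) (x : R) i0 c (y : 'I_n -> R) :
  atomless P -> admissible Xs -> Xs X ->
  (forall t, L i0 t = c) -> (forall i t, (L i t <= L i (y i))%R) ->
  \int[P]_(w in [set w | (x < X w)%R]) (Y w)%:E <= lam ->
  infconv Xs (fun i => supLVaR P Y (L i)) X <= x%:E.
Proof.
move=> Patom Xadm XsX Lc Lmax Xx.
have n0 : (0 < n)%N by apply: leq_ltn_trans (ltn_ord i0).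
have mA : measurable [set w | (x < X w)%R].
  by apply: measurable_gtr_set; case: Xadm => + _ _ _ _; apply.
have lam0 i : (0 <= L i (y i))%R by apply: ltW; case: (HL i) => _ /(_ (y i))[].
pose c' k := L (insubd i0 k) (y (insubd i0 k)).
have muY_atomless := density_measure_atomless (mY := mY) (Y0 := Y0) EYoo Patom.
have [|C [mC Ccov Cdisj CA]] := measure_atomless_cover (mu := muY) EYoo
    muY_atomless (n := n.-1) (c := c') mA (fun k => lam0 _).
  rewrite prednK// (eq_bigr (fun i => L i (y i))) => [|i _]; last first.
    by rewrite /c' valKd.
  rewrite -sumEFin (eq_bigr (fun i => lam_plus (L i))) => [//|i _].
  by rewrite (lam_plus_max (Lmax i)).
pose a i := if i == i0 then (x - \sum_(j < n | j != i0) y j)%R else y i.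
have sa : (\sum_(i < n) a i = x)%R.
  rewrite (bigD1 i0)//= {1}/a eqxx (eq_bigr y) ?subrK// => i /negbTE i0i.
  by rewrite /a i0i.
have [||Z [XsZ sZ ZA]] :=
    admissible_split (C := fun i : 'I_n => C i) Xadm XsX (fun i => mC i) _ _ sa.
- move=> w; have [k kn Ckw] := Ccov w.
  have kn' : (k < n)%N by rewrite (leq_ltn_trans kn)// ltn_predL.
  by exists (Ordinal kn').
- by move=> i j w /Cdisj h /h /val_inj.
apply: le_trans (ereal_inf_lbound _) _; first by exists Z.
rewrite -sa -sumEFin; apply: lee_sum => i _.
have [mXs _ _ _ _] := Xadm.
apply: (supLVaR_le mY Y0 (mXs _ (XsZ i))).
have -> : L i (a i) = L i (y i) by rewrite /a; case: eqP => [->|_]; rewrite ?Lc.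
have := CA i; rewrite /c' valKd; apply: le_trans.
apply: (le_measure muY) (ZA i); rewrite inE; last exact: measurableI.
exact: measurable_gtr_set (mXs _ (XsZ i)).
Qed.

End inf_convolution.

Theorem mainTheorem18 (d : measure_display) (T : measurableType d) (R : realType)
  (P : probability T R) (Y : T -> R) (n : nat) (L : 'I_n -> R -> R)
  (Xs : set (T -> R)) :
  atomless P ->
  measurable_fun setT Y -> (forall w, (0 <= Y w)%R) ->
  1 < \int[P]_w (Y w)%:E -> \int[P]_w (Y w)%:E < +oo ->
  (forall i, in_HI (L i)) ->
  attainable L ->
  (exists i, exists c : R, forall x, L i x = c) ->
  admissible Xs ->
  forall X, Xs X ->
    infconv Xs (fun i => supLVaR P Y (L i)) X =
    ereal_inf [set x%:E | x in [set x : R |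
      \int[P]_(w in [set w | (x < X w)%R]) (Y w)%:E <= \sum_(i < n) lam_plus (L i)]].
Proof.
move=> Patom mY Y0 EY1 EYoo HL Latt [i0 [c Lc]] Xadm X XsX.
have [y Lmax] := attainable_maximizers Latt Lc.
apply/eqP; rewrite eq_le; apply/andP; split.
  apply: le_ereal_inf_tmp => _ [x Xx <-].
  exact: (infconv_supLVaR_le mY Y0 EYoo HL Patom Xadm XsX Lc Lmax Xx).
apply: le_ereal_inf_tmp => _ [Z [XsZ sZ] <-].
have [mXs _ _ _ _] := Xadm.
exact: (tail_inf_le_sum_supLVaR mY Y0 EY1 EYoo HL (leq_ltn_trans (leq0n _) (ltn_ord i0))
  (fun i => mXs _ (XsZ i)) sZ).
Qed.
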